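(* Assume the CFL condition $0\le\lambda\sup_{w\ge1}W'(w)\le1$. Let $(y^0_i)_{i\in\mathbb Z}$ be a bounded sequence with $y^0_i\ge1$, and define recursively for $n\ge0$ $$w^n_i=\sum_{j\ge i}\Phi_{ij\alpha}y^n_j,\qquad y^{n+1}_i=y^n_i+\lambda\bigl(W(w^n_{i+1})-W(w^n_i)\bigr),\quad i\in\mathbb Z.$$ Then for every $\alpha>0$, every $i\in\mathbb Z$ and every $n\ge0$, $$\inf_{j\in\mathbb Z}y^0_j\le y^n_i\le\sup_{j\in\mathbb Z}y^0_j.$$
   Context: Kernel: $\Phi:[0,\infty)\to[0,\infty)$ is non-increasing with $\int_0^\infty\Phi(z)\,dz=1$ and $\int_0^\infty z\Phi(z)\,dz<\infty$; for $\alpha>0$, $\Phi_\alpha(z)=\alpha^{-1}\Phi(z/\alpha)$. Flux: $V\in C^1([0,\infty))$ is non-increasing and $W:[1,\infty)\to\mathbb R$, $W(w)=V(1/w)$. Discretization: $\Delta z>0$, $\Delta t>0$, $\lambda=\Delta t/\Delta z$, $z_j=(j-\tfrac12)\Delta z$ for $j\in\tfrac12\mathbb Z$, and for integers $j\ge i$, $\Phi_{ij\alpha}=\int_{z_{j-1/2}}^{z_{j+1/2}}\Phi_\alpha(\zeta-z_{i-1/2})\,d\zeta$. *)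

From Stdlib Require Import Reals ZArith.
From Coquelicot Require Import Coquelicot.
Open Scope R_scope.

Definition Phi_a (Phi : R -> R) (alpha z : R) : R := / alpha * Phi (z / alpha).

Definition W (V : R -> R) (w : R) : R := V (/ w).

(* z_j = (j - 1/2) dz, so z_{j-1/2} = (j-1) dz and z_{j+1/2} = j dz.
   Phi_{ij alpha} = int_{z_{j-1/2}}^{z_{j+1/2}} Phi_alpha(zeta - z_{i-1/2}) dzeta *)
Definition Phi_ij (Phi : R -> R) (alpha dz : R) (i j : Z) : R :=
  RInt (fun zeta => Phi_a Phi alpha (zeta - (IZR i - 1) * dz))
       ((IZR j - 1) * dz) (IZR j * dz).

Definition wconv (Phi : R -> R) (alpha dz : R) (y : Z -> R) (i : Z) : R :=
  Series (fun k : nat =>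
    Phi_ij Phi alpha dz i (i + Z.of_nat k)%Z * y (i + Z.of_nat k)%Z).

(* y^{n+1}_i = y^n_i + lambda (W(w^n_{i+1}) - W(w^n_i)), lambda = dt/dz *)
Fixpoint ysol (Phi V : R -> R) (alpha dz dt : R) (y0 : Z -> R) (n : nat) : Z -> R :=
  match n with
  | O => y0
  | S m => fun i =>
      let y := ysol Phi V alpha dz dt y0 m in
      y i + (dt / dz) * (W V (wconv Phi alpha dz y (i + 1)%Z)
                         - W V (wconv Phi alpha dz y i))
  end.

From Stdlib Require Import Reals ZArith Lra Lia.
From Coquelicot Require Import Coquelicot.
Open Scope R_scope.

(* The discrete convolution w_i = sum_{j >= i} Phi_{ij alpha} y_j is a forward
   convolution w_i = sum_k a_k y_{i+k} whose weights a_k are the masses of Phi on the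
   cells [k h, (k+1) h], h = dz/alpha, independently of i.  Since Phi is nonnegative,
   non-increasing and of mass 1, these weights are nonnegative, non-increasing and sum
   to 1.  Summing by parts, w_{i+1} - w_i = sum_k (a_k - a_{k+1}) y_{i+1+k} - a_0 y_i,
   so if all data lie in [m, M] then a_0 (m - y_i) <= w_{i+1} - w_i <= a_0 (M - y_i).
   The flux W(w) = V(1/w) is nondecreasing and, by the CFL condition, lambda-times
   Lipschitz with constant at most 1 on [1, oo); hence one step of the scheme maps
   data in [m, M] (with m >= 1) into [m, M].  Induction on the time step, started at
   m = inf y^0 and M = sup y^0, gives the theorem. *)

Lemma is_series_le (a b : nat -> R) (la lb : R) :
  (forall k, a k <= b k) -> is_series a la -> is_series b lb -> la <= lb.
Proof.
  intros Hab Ha Hb.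
  apply (is_lim_seq_le (sum_n a) (sum_n b) la lb); [|exact Ha|exact Hb].
  intros n. induction n as [|n IH].
  - rewrite !sum_O. apply Hab.
  - rewrite !sum_Sn. apply Rplus_le_compat; [exact IH | apply Hab].
Qed.

Lemma is_series_tail (a : nat -> R) (s : R) :
  is_series a s -> is_series (fun k => a (S k)) (s - a 0%nat).
Proof.
  intros Hs. apply is_series_incr_1.
  change (is_series a (s - a 0%nat + a 0%nat)).
  replace (s - a 0%nat + a 0%nat) with s by ring. exact Hs.
Qed.

Lemma is_series_head_le (a : nat -> R) (s : R) :
  (forall k, 0 <= a k) -> is_series a s -> a 0%nat <= s.
Proof.
  intros Hpos Hs.
  pose proof (is_series_tail a s Hs) as Htail.
  assert (Hzero : is_series (fun _ : nat => 0) 0).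
  { pose proof (is_series_scal_l 0 a s Hs) as Hscaled.
    change (is_series (fun k => 0 * a k) (0 * s)) in Hscaled.
    rewrite Rmult_0_l in Hscaled.
    exact (is_series_ext _ _ _ (fun k => Rmult_0_l (a k)) Hscaled). }
  assert (0 <= s - a 0%nat) by (apply (is_series_le _ _ _ _ (fun k => Hpos (S k)) Hzero Htail)).
  lra.
Qed.

Lemma weighted_series_bounds (b z : nat -> R) (s m M : R) :
  (forall k, 0 <= b k) -> is_series b s -> (forall k, m <= z k <= M) ->
  ex_series (fun k => b k * z k)
  /\ m * s <= Series (fun k => b k * z k) <= M * s.
Proof.
  intros Hb Hs Hz.
  assert (Hex : ex_series (fun k => b k * z k)).
  { apply (ex_series_le (fun k => b k * z k) (fun k => scal (Rabs m + Rabs M) (b k))).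
    - intros k. specialize (Hz k). specialize (Hb k).
      change (norm (b k * z k)) with (Rabs (b k * z k)).
      change (scal (Rabs m + Rabs M) (b k)) with ((Rabs m + Rabs M) * b k).
      rewrite Rabs_mult, (Rabs_pos_eq (b k) Hb), (Rmult_comm (Rabs m + Rabs M)).
      apply Rmult_le_compat_l; [exact Hb|].
      unfold Rabs; repeat destruct Rcase_abs; lra.
    - exists (scal (Rabs m + Rabs M) s). exact (is_series_scal_l (Rabs m + Rabs M) b s Hs). }
  split; [exact Hex | split].
  - apply (is_series_le (fun k => m * b k) (fun k => b k * z k)).
    + intros k. specialize (Hz k). specialize (Hb k). nra.
    + exact (is_series_scal_l m b s Hs).
    + exact (Series_correct _ Hex).
  - apply (is_series_le (fun k => b k * z k) (fun k => M * b k)).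
    + intros k. specialize (Hz k). specialize (Hb k). nra.
    + exact (Series_correct _ Hex).
    + exact (is_series_scal_l M b s Hs).
Qed.

Lemma telescoping_series (a : nat -> R) (s : R) :
  is_series a s -> is_series (fun k => a k - a (S k)) (a 0%nat).
Proof.
  intros Hs.
  pose proof (is_series_tail a s Hs) as Htail.
  replace (a 0%nat) with (plus s (opp (s - a 0%nat)))
    by (change (s + - (s - a 0%nat) = a 0%nat); ring).
  exact (is_series_minus _ _ _ _ Hs Htail).
Qed.

Definition forward_conv (a : nat -> R) (y : Z -> R) (i : Z) : R :=
  Series (fun k => a k * y (i + Z.of_nat k)%Z).

Section ForwardConvolution.

Variables (a : nat -> R) (s : R) (y : Z -> R) (m M : R).
Hypothesis Ha_nonneg : forall k, 0 <= a k.
Hypothesis Ha_series : is_series a s.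
Hypothesis Hy : forall j, m <= y j <= M.

Lemma forward_conv_bounds (i : Z) :
  ex_series (fun k => a k * y (i + Z.of_nat k)%Z)
  /\ m * s <= forward_conv a y i <= M * s.
Proof. exact (weighted_series_bounds a _ s m M Ha_nonneg Ha_series (fun k => Hy _)). Qed.

(* For non-increasing weights, w_{i+1} - w_i = sum_k (a_k - a_{k+1}) y_{i+1+k} - a_0 y_i,
   and the weights a_k - a_{k+1} are nonnegative with total mass a_0; hence the increment
   is bounded by a_0 times the distance from y_i to the bounds of the data. *)
Lemma forward_conv_increment (Ha_noninc : forall k, a (S k) <= a k) (i : Z) :
  a 0%nat * (m - y i) <= forward_conv a y (i + 1) - forward_conv a y i
  <= a 0%nat * (M - y i).
Proof.
  set (z := fun k : nat => y (i + 1 + Z.of_nat k)%Z).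
  assert (Hz : forall k, m <= z k <= M) by (intros k; apply Hy).
  assert (Hshift : forall k, y (i + Z.of_nat (S k))%Z = z k)
    by (intros k; unfold z; f_equal; lia).
  destruct (forward_conv_bounds i) as [Hex_i _].
  destruct (weighted_series_bounds (fun k => a (S k)) z (s - a 0%nat) m M
              (fun k => Ha_nonneg (S k)) (is_series_tail a s Ha_series) Hz)
    as [Hex_tail _].
  destruct (weighted_series_bounds (fun k => a k - a (S k)) z (a 0%nat) m M)
    as [_ Hdiff_bounds].
  { intros k. specialize (Ha_noninc k). lra. }
  { exact (telescoping_series a s Ha_series). }
  { exact Hz. }
  assert (Hw_i : forward_conv a y i = a 0%nat * y i + Series (fun k => a (S k) * z k)).
  { unfold forward_conv. rewrite Series_incr_1 by exact Hex_i.
    rewrite Z.add_0_r. f_equal. apply Series_ext. intros k. now rewrite Hshift. }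
  assert (Hw_i1 : forward_conv a y (i + 1) = Series (fun k => a k * z k)) by reflexivity.
  assert (Hex_i1 : ex_series (fun k => a k * z k)) by apply (forward_conv_bounds (i + 1)).
  assert (Hdiff : forward_conv a y (i + 1) - forward_conv a y i
                  = Series (fun k => (a k - a (S k)) * z k) - a 0%nat * y i).
  { rewrite Hw_i, Hw_i1.
    assert (Hsplit : Series (fun k => (a k - a (S k)) * z k)
                     = Series (fun k => a k * z k) - Series (fun k => a (S k) * z k)).
    { rewrite <- Series_minus by assumption. apply Series_ext. intros k. ring. }
    rewrite Hsplit. ring. }
  rewrite Hdiff. lra.
Qed.

End ForwardConvolution.

Section KernelCells.

Variable Phi : R -> R.
Variable l : R.
Hypothesis HPhi_int : is_RInt_gen Phi (at_point 0) (Rbar_locally p_infty) l.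

Lemma RInt_gen_tail (eps : posreal) :
  exists B, forall b, B < b -> exists v, is_RInt Phi 0 b v /\ Rabs (v - l) < eps.
Proof.
  assert (Hball : locally l (fun v => Rabs (v - l) < eps)) by (exists eps; auto).
  destruct (HPhi_int _ Hball) as [Q P HQ [B HB] HP].
  exists B. intros b Hb. exact (HP 0 b HQ (HB b Hb)).
Qed.

Lemma RInt_gen_integrable (b : R) : 0 <= b -> ex_RInt Phi 0 b.
Proof.
  intros Hb. destruct (RInt_gen_tail (mkposreal 1 Rlt_0_1)) as [B HB].
  destruct (HB (Rmax B b + 1)) as [v [Hv _]]; [pose proof (Rmax_l B b); lra|].
  apply (ex_RInt_Chasles_1 (V := R_CompleteNormedModule) Phi 0 b (Rmax B b + 1)).
  - pose proof (Rmax_r B b). lra.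
  - exists v. exact Hv.
Qed.

Definition cell (h : R) (k : nat) : R := RInt Phi (INR k * h) (INR (S k) * h).

Variable h : R.
Hypothesis Hh : 0 < h.

Lemma cell_integrable (k : nat) : ex_RInt Phi (INR k * h) (INR (S k) * h).
Proof.
  pose proof (pos_INR k) as Hk. rewrite S_INR.
  apply (ex_RInt_Chasles_2 (V := R_CompleteNormedModule) Phi 0); [nra|].
  apply RInt_gen_integrable. nra.
Qed.

Lemma cell_nonneg (HPhi_nonneg : forall z, 0 <= z -> 0 <= Phi z) (k : nat) :
  0 <= cell h k.
Proof.
  pose proof (pos_INR k) as Hk.
  apply RInt_ge_0; [rewrite S_INR; nra | apply cell_integrable |].
  intros x Hx. apply HPhi_nonneg. nra.
Qed.

(* A non-increasing kernel has non-increasing cell masses: shift the next cell by -h. *)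
Lemma cell_noninc (HPhi_noninc : forall x y, 0 <= x -> x <= y -> Phi y <= Phi x)
  (k : nat) : cell h (S k) <= cell h k.
Proof.
  assert (Hk : 0 <= INR k * h) by (pose proof (pos_INR k); nra).
  assert (Hlo : 1 * (INR k * h) + h = INR (S k) * h) by (rewrite S_INR; ring).
  assert (Hhi : 1 * (INR (S k) * h) + h = INR (S (S k)) * h)
    by (rewrite !S_INR; ring).
  assert (Hshift : cell h (S k)
    = RInt (fun x => scal 1 (Phi (1 * x + h))) (INR k * h) (INR (S k) * h)).
  { unfold cell. rewrite (RInt_comp_lin (V := R_CompleteNormedModule) Phi 1 h), Hlo, Hhi;
      [reflexivity|].
    rewrite Hlo, Hhi. apply cell_integrable. }
  rewrite Hshift. unfold cell. apply RInt_le.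
  - rewrite S_INR. lra.
  - apply (ex_RInt_comp_lin (V := R_CompleteNormedModule) Phi 1 h).
    rewrite Hlo, Hhi. apply cell_integrable.
  - apply cell_integrable.
  - intros x Hx. change (scal 1 (Phi (1 * x + h))) with (1 * Phi (1 * x + h)).
    rewrite Rmult_1_l. apply HPhi_noninc; lra.
Qed.

Lemma cell_partial_sum (N : nat) : sum_n (cell h) N = RInt Phi 0 (INR (S N) * h).
Proof.
  induction N as [|N IH].
  - rewrite sum_O. unfold cell. simpl. now rewrite Rmult_0_l.
  - rewrite sum_Sn, IH. unfold cell.
    apply (RInt_Chasles (V := R_CompleteNormedModule)).
    + apply RInt_gen_integrable. pose proof (pos_INR (S N)). nra.
    + apply cell_integrable.
Qed.

Lemma cell_series : is_series (cell h) l.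
Proof.
  apply (proj1 (is_lim_seq_spec _ l)). intros eps.
  destruct (RInt_gen_tail eps) as [B HB].
  destruct (nfloor_ex (Rmax 0 (B / h))) as [n [_ Hn]]; [apply Rmax_l|].
  exists n. intros N HN. rewrite cell_partial_sum.
  destruct (HB (INR (S N) * h)) as [v [Hv Hclose]].
  - apply le_INR in HN. rewrite S_INR. pose proof (Rmax_r 0 (B / h)).
    assert (HBh : B / h * h = B) by (field; lra).
    assert (B / h < INR N + 1) by lra. nra.
  - rewrite (is_RInt_unique _ _ _ _ Hv). exact Hclose.
Qed.

End KernelCells.

(* The discrete kernel weights Phi_{i,i+k,alpha} are the cell masses of Phi on the
   grid of step dz/alpha, independently of i: substitute zeta = alpha x + (i-1) dz. *)
Lemma Phi_ij_cell (Phi : R -> R) (alpha dz : R) (i : Z) (k : nat)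
  (Halpha : 0 < alpha) (Hdz : 0 < dz)
  (l : R) (HPhi_int : is_RInt_gen Phi (at_point 0) (Rbar_locally p_infty) l) :
  Phi_ij Phi alpha dz i (i + Z.of_nat k) = cell Phi (dz / alpha) k.
Proof.
  unfold Phi_ij, cell, Phi_a.
  rewrite plus_IZR, <- INR_IZR_INZ.
  set (v := - ((IZR i - 1) * dz) / alpha).
  assert (Hlo : / alpha * ((IZR i + INR k - 1) * dz) + v = INR k * (dz / alpha))
    by (unfold v; field; lra).
  assert (Hhi : / alpha * ((IZR i + INR k) * dz) + v = INR (S k) * (dz / alpha))
    by (unfold v; rewrite S_INR; field; lra).
  rewrite <- Hlo, <- Hhi, <- RInt_comp_lin.
  - apply RInt_ext. intros x _.
    change (scal (/ alpha) (Phi (/ alpha * x + v))) with (/ alpha * Phi (/ alpha * x + v)).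
    do 2 f_equal. unfold v. field. lra.
  - rewrite Hlo, Hhi. apply (cell_integrable Phi l); auto.
    apply Rdiv_lt_0_compat; lra.
Qed.

Section Flux.

Variables V V' : R -> R.
Hypothesis HV_der : forall x, 0 <= x -> is_derive V x (V' x).
Hypothesis HV_noninc : forall x y, 0 <= x -> x <= y -> V y <= V x.

Lemma W_ex_derive (w : R) : 0 < w -> ex_derive (W V) w.
Proof.
  intros Hw. unfold W. apply (ex_derive_comp V Rinv w).
  - exists (V' (/ w)). apply HV_der. left. apply Rinv_0_lt_compat, Hw.
  - auto_derive. lra.
Qed.

Lemma W_increment_bounds (L : R) (HL : forall w, 1 <= w -> Derive (W V) w <= L)
  (u v : R) : 1 <= u -> u <= v -> 0 <= W V v - W V u <= L * (v - u).
Proof.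
  intros Hu Huv. split.
  - assert (V (/ u) <= V (/ v)); [|unfold W; lra].
    apply HV_noninc; [left; apply Rinv_0_lt_compat; lra | apply Rinv_le_contravar; lra].
  - destruct (MVT_gen (W V) u v (Derive (W V))) as [c [Hc Hmvt]].
    + intros x Hx. rewrite Rmin_left in Hx by lra.
      apply Derive_correct, W_ex_derive. lra.
    + intros x Hx. rewrite Rmin_left in Hx by lra.
      apply continuity_pt_filterlim, (ex_derive_continuous (W V)), W_ex_derive. lra.
    + rewrite Rmin_left, Rmax_right in Hc by lra.
      rewrite Hmvt. apply Rmult_le_compat_r; [lra | apply HL; lra].
Qed.

End Flux.

(* The CFL condition 0 <= c * sup S <= 1 on a nonempty set S of reals yields a real
   upper bound L of S with 0 <= c L <= 1 (the supremum cannot be infinite). *)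
Lemma CFL_bound (c : R) (S : R -> Prop) (x0 : R) :
  0 < c -> S x0 ->
  Rbar_le 0 (Rbar_mult c (Lub_Rbar S)) /\ Rbar_le (Rbar_mult c (Lub_Rbar S)) 1 ->
  exists L, 0 <= c * L <= 1 /\ forall s, S s -> s <= L.
Proof.
  intros Hc HS [Hlow Hup].
  destruct (Lub_Rbar_correct S) as [Hub _].
  destruct (Lub_Rbar S) as [L| |].
  - exists L. split; [split; assumption | exact Hub].
  - exfalso. unfold Rbar_mult, Rbar_mult' in Hup.
    destruct (Rle_dec 0 c) as [Hc0|]; [|lra].
    destruct (Rle_lt_or_eq_dec 0 c Hc0); [exact Hup | lra].
  - destruct (Hub x0 HS).
Qed.

Lemma monotone_update_bounds (F : R -> R) (lam L a0 m M yi wi wi1 : R) :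
  (forall u v, 1 <= u -> u <= v -> 0 <= F v - F u <= L * (v - u)) ->
  0 <= lam -> 0 <= lam * L <= 1 -> 0 <= a0 <= 1 ->
  1 <= wi -> 1 <= wi1 -> m <= yi <= M ->
  a0 * (m - yi) <= wi1 - wi <= a0 * (M - yi) ->
  m <= yi + lam * (F wi1 - F wi) <= M.
Proof.
  intros HF Hlam HCFL Ha0 Hwi Hwi1 Hyi Hinc.
  assert (Hdamp : forall d, 0 <= d -> lam * L * (a0 * d) <= d).
  { intros d Hd.
    assert (lam * L * a0 <= 1) by (pose proof (Rmult_le_pos _ _ (proj1 HCFL) (proj1 Ha0)); nra).
    assert (0 <= (1 - lam * L * a0) * d) by (apply Rmult_le_pos; lra).
    nra. }
  destruct (Rle_lt_dec wi wi1) as [Hup | Hdown].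
  - destruct (HF wi wi1 Hwi Hup) as [Hmono Hlip].
    assert (lam * (F wi1 - F wi) <= lam * L * (wi1 - wi)) by nra.
    assert (lam * L * (wi1 - wi) <= lam * L * (a0 * (M - yi))) by nra.
    pose proof (Hdamp (M - yi)). nra.
  - destruct (HF wi1 wi Hwi1 (Rlt_le _ _ Hdown)) as [Hmono Hlip].
    assert (lam * (F wi - F wi1) <= lam * L * (wi - wi1)) by nra.
    assert (lam * L * (wi - wi1) <= lam * L * (a0 * (yi - m))) by nra.
    pose proof (Hdamp (yi - m)). nra.
Qed.

Lemma bounded_range_inf_sup (u : Z -> R) :
  (exists B, forall j, Rabs (u j) <= B) ->
  exists m M, Glb_Rbar (fun s => exists j, s = u j) = Finite m
    /\ Lub_Rbar (fun s => exists j, s = u j) = Finite M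
    /\ (forall j, m <= u j <= M)
    /\ (forall c, (forall j, c <= u j) -> c <= m).
Proof.
  intros [B HB].
  set (S := fun s => exists j, s = u j).
  assert (HS : S (u 0%Z)) by (exists 0%Z; reflexivity).
  destruct (Lub_Rbar_correct S) as [Hub Hlub].
  destruct (Glb_Rbar_correct S) as [Hlb Hglb].
  assert (HMle : Rbar_le (Lub_Rbar S) B).
  { apply Hlub. intros s [j ->]. pose proof (HB j). pose proof (Rle_abs (u j)).
    simpl. lra. }
  assert (HmGe : Rbar_le (- B) (Glb_Rbar S)).
  { apply Hglb. intros s [j ->]. pose proof (HB j). pose proof (Rle_abs (- u j)).
    rewrite Rabs_Ropp in *. simpl. lra. }
  destruct (Lub_Rbar S) as [M| |]; [| destruct HMle | destruct (Hub _ HS)].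
  destruct (Glb_Rbar S) as [m| |]; [| destruct (Hlb _ HS) | destruct HmGe].
  exists m, M. split; [reflexivity | split; [reflexivity | split]].
  - intros k. split; [apply (Hlb (u k)) | apply (Hub (u k))]; exists k; reflexivity.
  - intros c Hc. apply (Hglb (Finite c)). intros s [j ->]. apply Hc.
Qed.

(* One time step of the scheme preserves any bounds [m, M] of the data with m >= 1:
   the discrete convolution is a forward convolution with the cell masses of Phi,
   which are nonnegative, non-increasing and of total mass 1. *)
Lemma scheme_step_bounds (Phi V V' : R -> R) (dz dt alpha L m M : R) (y : Z -> R)
  (HPhi_nonneg : forall z, 0 <= z -> 0 <= Phi z)
  (HPhi_noninc : forall x y, 0 <= x -> x <= y -> Phi y <= Phi x)
  (HPhi_int : is_RInt_gen Phi (at_point 0) (Rbar_locally p_infty) 1)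
  (HV_der : forall x, 0 <= x -> is_derive V x (V' x))
  (HV_noninc : forall x y, 0 <= x -> x <= y -> V y <= V x)
  (Hdz : 0 < dz) (Hdt : 0 < dt) (Halpha : 0 < alpha)
  (HCFL : 0 <= dt / dz * L <= 1) (HL : forall w, 1 <= w -> Derive (W V) w <= L)
  (Hm : 1 <= m) (Hy : forall j, m <= y j <= M) (i : Z) :
  m <= y i + dt / dz * (W V (wconv Phi alpha dz y (i + 1)%Z)
                        - W V (wconv Phi alpha dz y i)) <= M.
Proof.
  assert (Hh : 0 < dz / alpha) by (apply Rdiv_lt_0_compat; lra).
  set (a := cell Phi (dz / alpha)).
  pose proof (cell_nonneg Phi 1 HPhi_int _ Hh HPhi_nonneg) as Ha_nonneg.
  pose proof (cell_noninc Phi 1 HPhi_int _ Hh HPhi_noninc) as Ha_noninc.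
  pose proof (cell_series Phi 1 HPhi_int _ Hh) as Ha_series.
  assert (Hconv : forall j, wconv Phi alpha dz y j = forward_conv a y j).
  { intros j. apply Series_ext. intros k.
    now rewrite (Phi_ij_cell Phi alpha dz j k Halpha Hdz 1 HPhi_int). }
  assert (Hw : forall j, 1 <= forward_conv a y j).
  { intros j. destruct (forward_conv_bounds a 1 y m M Ha_nonneg Ha_series Hy j)
      as [_ [Hlow _]]. lra. }
  rewrite !Hconv.
  apply (monotone_update_bounds (W V) _ L (a 0%nat)); auto.
  - intros u v. apply (W_increment_bounds V V'); assumption.
  - left. apply Rdiv_lt_0_compat; assumption.
  - split; [apply Ha_nonneg | apply (is_series_head_le a 1 Ha_nonneg Ha_series)].
  - apply (forward_conv_increment a 1 y m M); assumption.
Qed.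

Theorem lemma3p1 (Phi V V' : R -> R) (dz dt alpha : R) (y0 : Z -> R)
  (* kernel *)
  (HPhi_nonneg : forall z, 0 <= z -> 0 <= Phi z)
  (HPhi_noninc : forall x y, 0 <= x -> x <= y -> Phi y <= Phi x)
  (HPhi_int : is_RInt_gen Phi (at_point 0) (Rbar_locally p_infty) 1)
  (HPhi_mom : ex_RInt_gen (fun z => z * Phi z) (at_point 0) (Rbar_locally p_infty))
  (* flux: V in C^1([0,oo)), non-increasing *)
  (HV_der : forall x, 0 <= x -> is_derive V x (V' x))
  (HV'_cont : forall x, 0 <= x -> continuous V' x)
  (HV_noninc : forall x y, 0 <= x -> x <= y -> V y <= V x)
  (* discretization *)
  (Hdz : 0 < dz) (Hdt : 0 < dt)
  (* CFL: 0 <= lambda sup_{w>=1} W'(w) <= 1 *)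
  (HCFL : Rbar_le 0 (Rbar_mult (dt / dz)
             (Lub_Rbar (fun s => exists w, 1 <= w /\ s = Derive (W V) w)))
          /\ Rbar_le (Rbar_mult (dt / dz)
             (Lub_Rbar (fun s => exists w, 1 <= w /\ s = Derive (W V) w))) 1)
  (* initial data *)
  (Hy0_bdd : exists M, forall j, Rabs (y0 j) <= M)
  (Hy0_ge1 : forall j, 1 <= y0 j)
  (Halpha : 0 < alpha) :
  forall (i : Z) (n : nat),
    Rbar_le (Glb_Rbar (fun s => exists j, s = y0 j))
            (Finite (ysol Phi V alpha dz dt y0 n i))
    /\ Rbar_le (Finite (ysol Phi V alpha dz dt y0 n i))
               (Lub_Rbar (fun s => exists j, s = y0 j)).
Proof.
  intros i n.
  destruct (CFL_bound (dt / dz) (fun s => exists w, 1 <= w /\ s = Derive (W V) w)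
              (Derive (W V) 1)) as [L [HCFL_L HL]].
  { apply Rdiv_lt_0_compat; assumption. }
  { exists 1. split; [lra | reflexivity]. }
  { exact HCFL. }
  destruct (bounded_range_inf_sup y0 Hy0_bdd) as (m & M & -> & -> & Hy0 & Hgreatest).
  assert (Hm : 1 <= m) by (apply Hgreatest; exact Hy0_ge1).
  assert (Hinvariant : forall n j, m <= ysol Phi V alpha dz dt y0 n j <= M).
  { intros k. induction k as [|k IH]; [exact Hy0|].
    intros j. apply (scheme_step_bounds Phi V V' dz dt alpha L); auto.
    intros w Hw. apply HL. exists w. split; [exact Hw | reflexivity]. }
  exact (Hinvariant n i).
Qed.
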